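(* Let $\mathcal{A}=M_2(\mathbb{F})$ be endowed with an involution $*$ of the first kind and let $f$ be a multilinear $*$-polynomial. Let $\mathcal{S}$, $\mathcal{K}$, $\mathcal{Z}$ denote the sets of symmetric, skew-symmetric and central (scalar) elements of $\mathcal{A}$. Suppose one of the following holds: (1) $*$ is the transpose involution and $\mathbb{F}=\mathbb{R}$; (2) $*$ is the symplectic involution $\begin{pmatrix}a&b\\c&d\end{pmatrix}^*=\begin{pmatrix}d&-b\\-c&a\end{pmatrix}$ and $\mathbb{F}$ is an arbitrary field. Then the linear span of the image $f(\mathcal{A})$ is one of the subspaces \[ 0,\ \mathcal{Z},\ \mathcal{K},\ [\mathcal{S},\mathcal{K}],\ \mathcal{S},\ \mathcal{Z}+\mathcal{K},\ [\mathcal{A},\mathcal{A}],\ \mathcal{A}. \]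
   Context: An involution of the first kind on an $\mathbb{F}$-algebra $\mathcal{A}$ is an $\mathbb{F}$-linear map $*$ with $(a^* )^*=a$ and $(ab)^*=b^*a^*$. For subsets $U,V\subseteq\mathcal{A}$, $[U,V]$ denotes the linear span of all commutators $[u,v]=uv-vu$ with $u\in U$, $v\in V$. A $*$-polynomial is an element of the free algebra $\mathbb{F}\langle Y;Z\rangle$ on symmetric variables $y_i$ ($y_i^*=y_i$) and skew-symmetric variables $z_j$ ($z_j^*=-z_j$); its image $f(\mathcal{A})$ is the set of its values when symmetric elements of $\mathcal{A}$ are substituted for the $y_i$ and skew-symmetric elements for the $z_j$. It is multilinear if each variable occurs exactly once in every monomial. *)

From HB Require Import structures.
From mathcomp Require Import all_boot all_order all_algebra all_fingroup.
From mathcomp Require Export reals.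
Set Implicit Arguments. Unset Strict Implicit. Unset Printing Implicit Defensive.
Import Order.TTheory GRing.Theory Num.Theory.
Local Open Scope ring_scope.

Section StarDefs.
Variable F : fieldType.
Local Notation M := ('M[F]_2).

(* the symplectic involution [[a,b],[c,d]]^* = [[d,-b],[-c,a]] *)
Definition symp (A : M) : M :=
  \matrix_(i < 2, j < 2) (if i == j then A (rev_ord i) (rev_ord j) else - A i j).

Definition is_sym (inv : M -> M) (x : M) : Prop := inv x = x.
Definition is_skew (inv : M -> M) (x : M) : Prop := inv x = - x.
Definition is_central (x : M) : Prop := exists a : F, x = a%:M.

Definition lspan (P : M -> Prop) (x : M) : Prop :=
  exists (n : nat) (c : 'I_n -> F) (v : 'I_n -> M),
    (forall i, P (v i)) /\ x = \sum_(i < n) c i *: v i.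

Definition comm_span (U V : M -> Prop) : M -> Prop :=
  lspan (fun x => exists u v, U u /\ V v /\ x = u * v - v * u).

(* A multilinear *-polynomial in k variables x_0..x_(k-1):
   kind i = true means x_i is a symmetric variable y, false a skew one z;
   f = \sum_{s in S_k} c s x_{s 0} x_{s 1} ... x_{s (k-1)}. *)
Definition mpoly_eval (k : nat) (c : {perm 'I_k} -> F) (a : 'I_k -> M) : M :=
  \sum_(s : {perm 'I_k}) c s *: \prod_(i < k) a (s i).

Definition star_image (inv : M -> M) (k : nat) (kind : 'I_k -> bool)
    (c : {perm 'I_k} -> F) (x : M) : Prop :=
  exists a : 'I_k -> M,
    (forall i, if kind i then is_sym inv (a i) else is_skew inv (a i)) /\
    x = mpoly_eval c a.

Definition same_set (P Q : M -> Prop) : Prop := forall x, P x <-> Q x.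

Definition span_in_list (inv : M -> M) (P : M -> Prop) : Prop :=
     same_set P (fun x => x = 0)
  \/ same_set P is_central
  \/ same_set P (is_skew inv)
  \/ same_set P (comm_span (is_sym inv) (is_skew inv))
  \/ same_set P (is_sym inv)
  \/ same_set P (fun x => exists z w, is_central z /\ is_skew inv w /\ x = z + w)
  \/ same_set P (comm_span (fun _ => True) (fun _ => True))
  \/ same_set P (fun _ => True).

End StarDefs.

From Pilot Require Import Defs.
From HB Require Import structures.
From mathcomp Require Import all_boot all_order all_algebra all_fingroup.
From mathcomp Require Import reals.
From mathcomp Require Import ring lra.
From Stdlib Require Import Classical.
Import Order.TTheory GRing.Theory Num.Theory.
Local Open Scope ring_scope.
Set Implicit Arguments. Unset Strict Implicit.

(* As f is multilinear, the span V of f(A) is a subspace stable under every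
   algebra automorphism and every derivation of A commuting with *: applied to
   f(a_1, ..., a_k) they give f(phi a_1, ..., phi a_k), resp. the sum over i of
   the values of f with a_i replaced by d a_i, and these substitutions keep the
   symmetry type of each argument.
   The symplectic involution is the adjugate, so all inner automorphisms and
   all ad u with u* = -u qualify. Conjugation by U2 = 1 + E12 and ad E12 extract
   E12 from any non-scalar element of V, after which V contains sl_2 = K; hence
   V is 0, Z, K or A.
   For the transpose over an ordered field, conjugation by H2 = diag(1, -1) and
   ad J2 (J2 the rotation by a right angle) separate the components Z, K and
   S0 = [S, K] (traceless symmetric matrices), and ad J2 rotates S0; hence V is
   a sum of some of these three components, and the eight such sums are the
   eight spaces of the list. *)

Notation i0 := (@ord0 1).
Notation i1 := (@ord_max 1).

Lemma ord2_ind (P : 'I_2 -> Prop) : P i0 -> P i1 -> forall i, P i.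
Proof. by move=> P0 P1 [[|[|m]] Hm] //; [move: P0 | move: P1]; congr P; apply: val_inj. Qed.

Section Mx2.
Variable R : pzRingType.
Local Notation M := 'M[R]_2.

Definition mx2 (a b c d : R) : M :=
  \matrix_(i, j) if i == i0 then (if j == i0 then a else b) else (if j == i0 then c else d).

Ltac by_entries := apply/matrixP; do 2 elim/ord2_ind; by rewrite !mxE.

Lemma mx2_eta (x : M) : x = mx2 (x i0 i0) (x i0 i1) (x i1 i0) (x i1 i1).
Proof. by_entries. Qed.

Lemma mx2_00 a b c d : mx2 a b c d i0 i0 = a. Proof. by rewrite mxE. Qed.
Lemma mx2_01 a b c d : mx2 a b c d i0 i1 = b. Proof. by rewrite mxE. Qed.
Lemma mx2_10 a b c d : mx2 a b c d i1 i0 = c. Proof. by rewrite mxE. Qed.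
Lemma mx2_11 a b c d : mx2 a b c d i1 i1 = d. Proof. by rewrite mxE. Qed.

Lemma mx2_inj a b c d a' b' c' d' :
  mx2 a b c d = mx2 a' b' c' d' -> [/\ a = a', b = b', c = c' & d = d'].
Proof.
move=> E; have e (i j : 'I_2) : mx2 a b c d i j = mx2 a' b' c' d' i j by rewrite E.
by move: (e i0 i0) (e i0 i1) (e i1 i0) (e i1 i1); rewrite !mxE.
Qed.

Lemma mx2_add a b c d a' b' c' d' :
  mx2 a b c d + mx2 a' b' c' d' = mx2 (a + a') (b + b') (c + c') (d + d').
Proof. by_entries. Qed.

Lemma mx2_opp a b c d : - mx2 a b c d = mx2 (- a) (- b) (- c) (- d).
Proof. by_entries. Qed.

Lemma mx2_scale k a b c d : k *: mx2 a b c d = mx2 (k * a) (k * b) (k * c) (k * d).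
Proof. by_entries. Qed.

Lemma mx2_mul a b c d a' b' c' d' :
  mx2 a b c d * mx2 a' b' c' d' =
  mx2 (a * a' + b * c') (a * b' + b * d') (c * a' + d * c') (c * b' + d * d').
Proof.
apply/matrixP; do 2 elim/ord2_ind;
by rewrite -mulmxE !mxE !big_ord_recl big_ord0 !mxE addr0.
Qed.

Lemma mx2_scalar a : a%:M = mx2 a 0 0 a :> M.
Proof. by_entries. Qed.

Lemma mx2_zero : 0 = mx2 0 0 0 0 :> M.
Proof. by_entries. Qed.

Lemma mx2_one : 1 = mx2 1 0 0 1 :> M.
Proof. exact: mx2_scalar. Qed.

Lemma mx2_tr a b c d : (mx2 a b c d)^T = mx2 a c b d.
Proof. by_entries. Qed.

Definition E11 : M := mx2 1 0 0 0.
Definition E12 : M := mx2 0 1 0 0.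
Definition E21 : M := mx2 0 0 1 0.
Definition H2 : M := mx2 1 0 0 (-1).
Definition J2 : M := mx2 0 1 (-1) 0.
Definition P2 : M := mx2 0 1 1 0.
Definition U2 : M := mx2 1 1 0 1.
Definition U2inv : M := mx2 1 (-1) 0 1.

End Mx2.
Arguments E11 {R}. Arguments E12 {R}. Arguments E21 {R}. Arguments H2 {R}.
Arguments J2 {R}. Arguments P2 {R}. Arguments U2 {R}. Arguments U2inv {R}.

Lemma mx2_symp (F : fieldType) (a b c d : F) : symp (mx2 a b c d) = mx2 d (- b) (- c) a.
Proof.
by apply/matrixP; do 2 elim/ord2_ind; rewrite !mxE /= ?mxE.
Qed.

Tactic Notation "mx2_coords" constr(x) ident(a) ident(b) ident(c) ident(d) :=
  rewrite (mx2_eta x); move: (x i0 i0) (x i0 i1) (x i1 i0) (x i1 i1) => a b c d.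

Ltac mx2_simpl :=
  rewrite /E11 /E12 /E21 /H2 /J2 /P2 /U2 /U2inv ?(mx2_one, mx2_zero, mx2_scalar);
  rewrite ?(mx2_mul, mx2_add, mx2_opp, mx2_scale, mx2_tr, mx2_symp,
            mx2_00, mx2_01, mx2_10, mx2_11).

Section Mx2Constants.
Variable R : comPzRingType.
Local Notation M := 'M[R]_2.

Lemma H2_tr : H2^T = H2 :> M. Proof. by mx2_simpl. Qed.
Lemma P2_tr : P2^T = P2 :> M. Proof. by mx2_simpl. Qed.
Lemma J2_tr : J2^T = - J2 :> M. Proof. by mx2_simpl; rewrite !oppr0 opprK. Qed.
Lemma mulH2H2 : H2 * H2 = 1 :> M. Proof. by mx2_simpl; congr mx2; ring. Qed.
Lemma mulP2P2 : P2 * P2 = 1 :> M. Proof. by mx2_simpl; congr mx2; ring. Qed.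
Lemma mulU2U2inv : U2 * U2inv = 1 :> M. Proof. by mx2_simpl; congr mx2; ring. Qed.
Lemma mulU2invU2 : U2inv * U2 = 1 :> M. Proof. by mx2_simpl; congr mx2; ring. Qed.

End Mx2Constants.

Lemma derivation_prod (R : pzRingType) (d : R -> R) n (b : 'I_n -> R) :
  (forall x y, d (x * y) = d x * y + x * d y) ->
  d (\prod_(i < n) b i) = \sum_(j < n) \prod_(i < n) (if i == j then d (b i) else b i).
Proof.
move=> dM; have d1 : d 1 = 0.
  by have := dM 1 1; rewrite !mulr1 mul1r -{1}[d 1]addr0 => /addrI ->.
elim: n b => [|n IH] b; first by rewrite !big_ord0 d1.
rewrite big_ord_recl dM IH [RHS]big_ord_recl mulr_sumr; congr (_ + _).
  by rewrite big_ord_recl eqxx.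
apply: eq_bigr => j _; rewrite big_ord_recl; congr (_ * _).
Qed.

Lemma antimorph_ad (R : pzRingType) (inv : R -> R) u y :
  {morph inv : x y / x - y} -> (forall x y, inv (x * y) = inv y * inv x) ->
  inv u = - u -> inv (u * y - y * u) = u * inv y - inv y * u.
Proof. by move=> invB invM invu; rewrite invB !invM invu mulrN mulNr opprK addrC. Qed.

Section LinearSpan.
Variable F : fieldType.
Local Notation M := 'M[F]_2.
Implicit Types (P V : M -> Prop) (x y : M).

Record subspace V : Prop := Subspace {
  subspace0 : V 0;
  subspaceD : forall x y, V x -> V y -> V (x + y);
  subspaceZ : forall a x, V x -> V (a *: x) }.

Lemma subspaceB V x y : subspace V -> V x -> V y -> V (x - y).
Proof. by case=> _ VD VZ Vx Vy; apply: VD => //; rewrite -scaleN1r; apply: VZ. Qed.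

Lemma scalable_fun0 (phi : M -> M) : (forall a, {morph phi : y / a *: y}) -> phi 0 = 0.
Proof. by move=> phiZ; move: (phiZ 0 0); rewrite !scale0r. Qed.

Lemma mem_lspan P x : P x -> lspan P x.
Proof. by move=> Px; exists 1%N, (fun _ => 1), (fun _ => x); rewrite big_ord1 scale1r. Qed.

Lemma lspan_subspace P : subspace (lspan P).
Proof.
split.
- by exists 0%N, (fun _ => 0), (fun _ => 0); rewrite big_ord0; split => // -[].
- move=> _ _ [n [c [v [Pv ->]]]] [m [d [w [Pw ->]]]].
  exists (n + m)%N, (fun i => match split i with inl j => c j | inr j => d j end),
    (fun i => match split i with inl j => v j | inr j => w j end).
  split; first by move=> i; case: (split i).
  rewrite big_split_ord; congr (_ + _); apply: eq_bigr => i _.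
    by rewrite (unsplitK (inl i)).
  by rewrite (unsplitK (inr i)).
- move=> a _ [n [c [v [Pv ->]]]]; exists n, (fun i => a * c i), v; split => //.
  by rewrite scaler_sumr; apply: eq_bigr => i _; rewrite scalerA.
Qed.

Lemma lspan_min P V x : subspace V -> (forall y, P y -> V y) -> lspan P x -> V x.
Proof. by case=> V0 VD VZ PV [n [c [v [Pv ->]]]]; apply: big_ind => // i _; apply/VZ/PV. Qed.

Lemma lspan_stable P (phi : M -> M) x :
  {morph phi : y z / y + z} -> (forall a, {morph phi : y / a *: y}) ->
  (forall y, P y -> lspan P (phi y)) -> lspan P x -> lspan P (phi x).
Proof.
move=> phiD phiZ PphiP; have [L0 LD LZ] := lspan_subspace P.
apply: (@lspan_min P (fun y => lspan P (phi y))) => //.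
split=> [|y z Ly Lz|a y Ly]; rewrite ?(scalable_fun0 phiZ) ?phiD ?phiZ.
- exact: L0.
- exact: LD.
- exact: LZ.
Qed.

End LinearSpan.

Section StarImageSpan.
Variables (F : fieldType) (inv : 'M[F]_2 -> 'M[F]_2).
Variables (k : nat) (kind : 'I_k -> bool) (c : {perm 'I_k} -> F).
Local Notation M := 'M[F]_2.
Local Notation V := (lspan (star_image inv kind c)).

Lemma kind_stable (phi : M -> M) (b : bool) y :
  (forall a, {morph phi : z / a *: z}) -> (forall z, inv (phi z) = phi (inv z)) ->
  (if b then Defs.is_sym inv y else Defs.is_skew inv y) ->
  (if b then Defs.is_sym inv (phi y) else Defs.is_skew inv (phi y)).
Proof.
rewrite /Defs.is_sym /Defs.is_skew => phiZ phi_inv; rewrite phi_inv.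
by case: b => -> //; rewrite -scaleN1r phiZ scaleN1r.
Qed.

Lemma mpoly_eval_morph (phi : M -> M) (a : 'I_k -> M) :
  {morph phi : y z / y + z} -> (forall r, {morph phi : y / r *: y}) ->
  {morph phi : y z / y * z} -> phi 1 = 1 ->
  phi (mpoly_eval c a) = mpoly_eval c (fun i => phi (a i)).
Proof.
move=> phiD phiZ phiM phi1.
rewrite /mpoly_eval (big_morph phi phiD (scalable_fun0 phiZ)); apply: eq_bigr => s _.
by rewrite phiZ (big_morph phi phiM phi1).
Qed.

Lemma mpoly_eval_der (d : M -> M) (a : 'I_k -> M) :
  {morph d : y z / y + z} -> (forall r, {morph d : y / r *: y}) ->
  (forall y z, d (y * z) = d y * z + y * d z) ->
  d (mpoly_eval c a) =
  \sum_(m < k) mpoly_eval c (fun i => if i == m then d (a i) else a i).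
Proof.
move=> dD dZ dM.
rewrite /mpoly_eval (big_morph d dD (scalable_fun0 dZ)) exchange_big /=; apply: eq_bigr => s _.
rewrite dZ derivation_prod // -scaler_sumr; congr (_ *: _).
rewrite [RHS](reindex_inj (@perm_inj _ s)) /=; apply: eq_bigr => j _.
by apply: eq_bigr => i _; rewrite (inj_eq (@perm_inj _ s)).
Qed.

Lemma star_span_conj g h x : h * g = 1 -> g * h = 1 ->
  (forall y, inv (g * y * h) = g * inv y * h) -> V x -> V (g * x * h).
Proof.
move=> hg gh conj_inv; pose conj y := g * y * h.
have cD : {morph conj : y z / y + z} by move=> y z; rewrite /conj mulrDr mulrDl.
have cZ r : {morph conj : y / r *: y} by move=> y; rewrite /conj -scalerAr -scalerAl.
have cM : {morph conj : y z / y * z}.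
  by move=> y z; rewrite /conj !mulrA -[g * y * h * g]mulrA hg mulr1.
apply: (lspan_stable cD cZ) => _ [a [Ha ->]]; apply: mem_lspan.
exists (fun i => conj (a i)); split; first by move=> i; exact: kind_stable cZ conj_inv (Ha i).
by rewrite (mpoly_eval_morph _ cD cZ cM) // /conj mulr1.
Qed.

Lemma star_span_ad u x :
  (forall y, inv (u * y - y * u) = u * inv y - inv y * u) -> V x -> V (u * x - x * u).
Proof.
move=> ad_inv; pose ad y := u * y - y * u.
have adD : {morph ad : y z / y + z}.
  by move=> y z; rewrite /ad mulrDr mulrDl opprD addrACA.
have adZ r : {morph ad : y / r *: y} by move=> y; rewrite /ad -scalerAr -scalerAl scalerBr.
have adM y z : ad (y * z) = ad y * z + y * ad z.
  by rewrite /ad mulrBl mulrBr !mulrA addrA subrK.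
have [V0 VD _] := lspan_subspace (star_image inv kind c).
apply: (lspan_stable adD adZ) => _ [a [Ha ->]].
rewrite (mpoly_eval_der _ adD adZ adM); apply: big_ind => // m _; apply: mem_lspan.
exists (fun i => if i == m then ad (a i) else a i); split => // i.
by case: (i == m); [exact: kind_stable adZ ad_inv (Ha i) | exact: Ha].
Qed.

End StarImageSpan.

Section Symplectic.
Variable F : fieldType.
Local Notation M := 'M[F]_2.
Implicit Types x y g h : M.

Lemma symp_sub : {morph @symp F : x y / x - y}.
Proof.
by move=> x y; mx2_coords x a b c d; mx2_coords y a' b' c' d'; mx2_simpl; congr mx2; ring.
Qed.

Lemma symp_mul x y : symp (x * y) = symp y * symp x.
Proof. by mx2_coords x a b c d; mx2_coords y a' b' c' d'; mx2_simpl; congr mx2; ring. Qed.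

Lemma symp1 : symp 1 = 1 :> M.
Proof. by mx2_simpl; congr mx2; ring. Qed.

Lemma symp_mul_self x : symp x * x = (x i0 i0 * x i1 i1 - x i0 i1 * x i1 i0)%:M.
Proof. by mx2_coords x a b c d; mx2_simpl; congr mx2; ring. Qed.

(* symp p * p is the scalar det p, so symp p is a multiple of p^-1. *)
Lemma symp_conj g h y : h * g = 1 -> g * h = 1 -> symp (g * y * h) = g * symp y * h.
Proof.
have symp_inv (p q : M) : p * q = 1 -> exists s, symp p = s *: q.
  move=> pq; exists (p i0 i0 * p i1 i1 - p i0 i1 * p i1 i0).
  by rewrite -[symp p]mulr1 -pq mulrA symp_mul_self -scalemx1 -scalerAl mul1r.
move=> hg gh; have [[s Eh] [t Eg]] := (symp_inv _ _ hg, symp_inv _ _ gh).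
have st1 : s * t = 1.
  have := congr1 (@symp F) gh; rewrite symp_mul symp1 Eh Eg -scalerAl -scalerAr scalerA gh.
  by move/(congr1 (fun m : M => m i0 i0)); rewrite !mxE /= mulr1.
by rewrite !symp_mul Eh Eg -scalerAl -!scalerAr scalerA st1 scale1r mulrA.
Qed.

Lemma symp_E12 : symp E12 = - E12 :> M.
Proof. by mx2_simpl; rewrite !oppr0. Qed.

Lemma symp_ad u y : symp u = - u -> symp (u * y - y * u) = u * symp y - symp y * u.
Proof. exact/antimorph_ad/symp_mul/symp_sub. Qed.

End Symplectic.

Lemma trmx_conj (R : comPzRingType) n (g h y : 'M[R]_n) :
  g^T = h -> (g * y * h)^T = g * y^T * h.
Proof. by move=> gh; rewrite -!mulmxE !trmx_mul -gh trmxK mulmxA. Qed.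

Lemma trmx_ad (R : comPzRingType) n (u y : 'M[R]_n) :
  u^T = - u -> (u * y - y * u)^T = u * y^T - y^T * u.
Proof. by apply: antimorph_ad => [x z | x z]; [exact: raddfB | rewrite -!mulmxE trmx_mul]. Qed.

Lemma is_centralE (F : fieldType) (x : 'M[F]_2) :
  is_central x <-> [/\ x i0 i1 = 0, x i1 i0 = 0 & x i0 i0 = x i1 i1].
Proof.
split=> [[a ->]|[b0 c0 ad]]; first by rewrite mx2_scalar !mxE.
by exists (x i0 i0); move: b0 c0 ad; mx2_coords x a b c d; mx2_simpl => -> -> ->.
Qed.

Lemma symp_skewE (F : fieldType) (x : 'M[F]_2) :
  Defs.is_skew (@symp F) x <-> x i0 i0 + x i1 i1 = 0.
Proof.
rewrite /Defs.is_skew; mx2_coords x a b c d; mx2_simpl.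
by split=> [/mx2_inj [-> _ _ _]|/addr0_eq <-]; rewrite ?subrr ?opprK.
Qed.

Section SymplecticInvariantSubspaces.
Variable F : fieldType.
Local Notation M := 'M[F]_2.
Implicit Types x y z : M.
Variable V : M -> Prop.
Hypothesis V_subspace : subspace V.
Hypothesis V_ad : forall x, V x -> V (E12 * x - x * E12).
Hypothesis V_swap : forall x, V x -> V (P2 * x * P2).
Hypothesis V_shear : forall x, V x -> V (U2 * x * U2inv).

(* U2 = 1 + E12, so conjugation by U2 is x + [E12, x] - x10 E12. *)
Lemma V_scale_E12 x : V x -> V (x i1 i0 *: E12).
Proof.
move=> Vx; have -> : x i1 i0 *: E12 = (E12 * x - x * E12) - (U2 * x * U2inv - x).
  by mx2_coords x a b c d; mx2_simpl; congr mx2; ring.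
by apply: subspaceB => //; [exact: V_ad | apply: subspaceB => //; exact: V_shear].
Qed.

Lemma V_E12 x : V x -> ~ is_central x -> V E12.
Proof.
have [_ _ VZ] := V_subspace.
have V_E12_scaled s : s != 0 -> V (s *: E12) -> V E12.
  by move=> s0 /(VZ s^-1); rewrite scalerA mulVf // scale1r.
move=> Vx; rewrite is_centralE.
have [c0|c0] := eqVneq (x i1 i0) 0; last by move=> _; exact: V_E12_scaled c0 (V_scale_E12 Vx).
have [b0|b0] := eqVneq (x i0 i1) 0; last first.
  move=> _; apply: (V_E12_scaled _ b0).
  suff <- : (P2 * x * P2) i1 i0 = x i0 i1 by exact: V_scale_E12 (V_swap Vx).
  by mx2_coords x a b c d; mx2_simpl; ring.
move=> noncentral; have da : x i1 i1 - x i0 i0 != 0.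
  by rewrite subr_eq0; apply/eqP => da; apply: noncentral.
apply: (V_E12_scaled _ da).
suff -> : (x i1 i1 - x i0 i0) *: E12 = E12 * x - x * E12 by exact: V_ad.
by move: b0 c0; mx2_coords x a b c d; mx2_simpl => -> ->; congr mx2; ring.
Qed.

Lemma V_traceless : V E12 -> forall x, x i0 i0 + x i1 i1 = 0 -> V x.
Proof.
move=> V12; have [_ VD VZ] := V_subspace.
have V21 : V E21.
  suff -> : E21 = P2 * E12 * P2 :> M by exact: V_swap.
  by mx2_simpl; congr mx2; ring.
have VH : V H2.
  suff -> : H2 = E12 * E21 - E21 * E12 :> M by exact: V_ad.
  by mx2_simpl; congr mx2; ring.
move=> x; mx2_coords x a b c d; mx2_simpl => /addr0_eq <-.
have -> : mx2 a b c (- a) = a *: H2 + b *: E12 + c *: E21.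
  by mx2_simpl; congr mx2; ring.
exact (VD _ _ (VD _ _ (VZ a _ VH) (VZ b _ V12)) (VZ c _ V21)).
Qed.

Lemma symp_invariant_span_in_list : span_in_list (@symp F) V.
Proof.
have [V0 VD VZ] := V_subspace.
have [[y [Vy noncentral]]|all_central] := classic (exists y, V y /\ ~ is_central y).
  have V12 := V_E12 Vy noncentral.
  have [[z [Vz trz]]|traceless] := classic (exists z, V z /\ z i0 i0 + z i1 i1 <> 0).
    do 7 right; move=> x; split=> // _.
    pose t := (x i0 i0 + x i1 i1) / (z i0 i0 + z i1 i1).
    rewrite -(subrK (t *: z) x); apply: VD (VZ _ _ Vz).
    by apply: V_traceless => //; rewrite !mxE /t; field; apply/eqP.
  right; right; left=> x; rewrite symp_skewE; split; last exact: V_traceless.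
  by move=> Vx; apply: NNPP => trx; apply: traceless; exists x.
have {}all_central x : V x -> is_central x.
  by move=> Vx; apply: NNPP => ?; apply: all_central; exists x.
have [[z [Vz z0]]|all_zero] := classic (exists z, V z /\ z <> 0).
  right; left=> x; split; first exact: all_central.
  have [s Ez] := all_central _ Vz; have s0 : s != 0.
    by apply: contra_notN z0 => /eqP s0; rewrite Ez s0 mx2_scalar -mx2_zero.
  by move=> [r ->]; rewrite -(mulfVK s0 r) -scale_scalar_mx -Ez; apply: VZ.
left=> x; split=> [Vx|->//]; apply: NNPP => ?; apply: all_zero; by exists x.
Qed.

End SymplecticInvariantSubspaces.

Lemma flag_dichotomy (T : Type) (V cond : T -> Prop) (A : Prop) :
  (forall x, V x -> ~ cond x -> A) ->
  exists b : bool, (b -> A) /\ (~~ b -> forall x, V x -> cond x).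
Proof.
move=> witness; have [[x [Vx ncx]]|all_cond] := classic (exists x, V x /\ ~ cond x).
  by exists true; split=> // _; exact: witness ncx.
exists false; split=> // _ x Vx; apply: NNPP => ncx; apply: all_cond; by exists x.
Qed.

Lemma same_set_trans (F : fieldType) (P Q S : 'M[F]_2 -> Prop) :
  same_set P Q -> same_set Q S -> same_set P S.
Proof. by move=> PQ QS x; rewrite PQ QS. Qed.

Section TransposeComponents.
Variable R : realFieldType.
Local Notation M := 'M[R]_2.
Implicit Types x y : M.

(* The sum of those of the components Z = R 1, K = R J2 and S0 = R H2 + R P2
   whose flag is set. *)
Definition comp_sum (bZ bK bS : bool) x : Prop :=
  [/\ if bZ then True else x i0 i0 + x i1 i1 = 0,
      if bK then True else x i0 i1 = x i1 i0 &
      if bS then True else x i0 i0 = x i1 i1 /\ x i0 i1 + x i1 i0 = 0].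

Lemma comp_sum_subspace bZ bK bS : subspace (comp_sum bZ bK bS).
Proof.
split=> [|x y|r x]; rewrite /comp_sum.
- by rewrite mx2_zero; mx2_simpl; case: bZ; case: bK; case: bS; split; rewrite ?addr0.
- mx2_coords x a b c d; mx2_coords y a' b' c' d'; mx2_simpl.
  by case: bZ; case: bK; case: bS => /= -[? ? ?] [? ? ?]; split; intuition lra.
- mx2_coords x a b c d; mx2_simpl.
  by case: bZ; case: bK; case: bS => /= -[? ? ?]; split; intuition nra.
Qed.

Lemma comp_sum_zero : same_set (comp_sum false false false) (fun x => x = 0).
Proof.
move=> x; split=> [|->]; last exact: subspace0 (comp_sum_subspace _ _ _).
rewrite /comp_sum mx2_zero; mx2_coords x a b c d; mx2_simpl.
by move=> [? ? [? ?]]; congr mx2; lra.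
Qed.

Lemma comp_sum_central : same_set (comp_sum true false false) (@is_central R).
Proof.
move=> x; rewrite is_centralE /comp_sum; mx2_coords x a b c d; mx2_simpl.
by split=> [[_ ? [? ?]]|[? ? ?]]; split; lra.
Qed.

Lemma comp_sum_skew : same_set (comp_sum false true false) (Defs.is_skew (@trmx R 2 2)).
Proof.
move=> x; rewrite /comp_sum /Defs.is_skew; mx2_coords x a b c d; mx2_simpl.
by split=> [[? _ [? ?]]|/mx2_inj [? ? ? ?]]; [congr mx2 | split]; lra.
Qed.

Lemma comp_sum_sym : same_set (comp_sum true false true) (Defs.is_sym (@trmx R 2 2)).
Proof.
move=> x; rewrite /comp_sum /Defs.is_sym; mx2_coords x a b c d; mx2_simpl.
by split=> [[_ ? _]|/mx2_inj [? ? ? ?]]; [congr mx2 | split]; lra.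
Qed.

Lemma comp_sum_central_skew : same_set (comp_sum true true false)
  (fun x => exists z w, is_central z /\ Defs.is_skew (@trmx R 2 2) w /\ x = z + w).
Proof.
move=> x; rewrite /comp_sum /Defs.is_skew; split.
  mx2_coords x a b c d; mx2_simpl => -[_ _ [? ?]].
  exists a%:M, (mx2 0 b c 0); split; first by exists a.
  by rewrite mx2_scalar; mx2_simpl; split; congr mx2; lra.
move=> [_ [w [[s ->] [+ ->]]]]; mx2_coords w a b c d; rewrite mx2_scalar; mx2_simpl.
by move=> /mx2_inj [? ? ? ?]; split; lra.
Qed.

Lemma comp_sum_full : same_set (comp_sum true true true) (fun _ => True).
Proof. by []. Qed.

Lemma comp_sum_comm :
  same_set (comp_sum false true true) (comm_span (fun _ => True) (fun _ => True)).
Proof.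
have comm u v : comm_span (fun _ : M => True) (fun _ => True) (u * v - v * u).
  by apply: mem_lspan; exists u, v.
have [_ LD LZ] := lspan_subspace (fun x : M => exists u v, True /\ True /\ x = u * v - v * u).
move=> x; split.
  move=> [trx _ _]; suff -> : x = x i0 i0 *: (E12 * E21 - E21 * E12) +
      x i0 i1 *: (E11 * E12 - E12 * E11) + x i1 i0 *: (E21 * E11 - E11 * E21).
    exact (LD _ _ (LD _ _ (LZ _ _ (comm _ _)) (LZ _ _ (comm _ _))) (LZ _ _ (comm _ _))).
  by move: trx; mx2_coords x a b c d; mx2_simpl => ?; congr mx2; lra.
apply: lspan_min; first exact: comp_sum_subspace.
move=> _ [u [v [_ [_ ->]]]]; rewrite /comp_sum.
by mx2_coords u a b c d; mx2_coords v a' b' c' d'; mx2_simpl; split=> //; ring.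
Qed.

Lemma comp_sum_sym_skew_comm : same_set (comp_sum false false true)
  (comm_span (Defs.is_sym (@trmx R 2 2)) (Defs.is_skew (@trmx R 2 2))).
Proof.
pose SK x := exists u v, Defs.is_sym (@trmx R 2 2) u /\ Defs.is_skew (@trmx R 2 2) v /\
  x = u * v - v * u.
have comm u v : u^T = u -> v^T = - v -> lspan SK (u * v - v * u).
  by move=> symu skewv; apply: mem_lspan; exists u, v.
have [_ LD LZ] := lspan_subspace SK.
move=> x; split.
  move=> [trx symx _]; suff -> : x = (- x i0 i0 / 2) *: (P2 * J2 - J2 * P2) +
      (x i0 i1 / 2) *: (H2 * J2 - J2 * H2).
    exact (LD _ _ (LZ _ _ (comm _ _ (P2_tr _) (J2_tr _))) (LZ _ _ (comm _ _ (H2_tr _) (J2_tr _)))).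
  move: trx symx; mx2_coords x a b c d; mx2_simpl => /addr0_eq <- <-.
  by congr mx2; field.
apply: lspan_min; first exact: comp_sum_subspace.
move=> _ [u [v [symu [skewv ->]]]]; move: symu skewv.
rewrite /Defs.is_sym /Defs.is_skew /comp_sum.
mx2_coords u a b c d; mx2_coords v a' b' c' d'; mx2_simpl.
move=> /mx2_inj [_ -> _ _] /mx2_inj [? ? ? ?].
have [-> -> ->] : [/\ a' = 0, d' = 0 & c' = - b'] by split; lra.
by split=> //; ring.
Qed.

End TransposeComponents.

Lemma sqr_add_sqr_eq0 (R : realDomainType) (p q : R) :
  (p ^+ 2 + q ^+ 2 == 0) = (p == 0) && (q == 0).
Proof. by rewrite paddr_eq0 ?sqr_ge0 // !sqrf_eq0. Qed.

Section TransposeInvariantSubspaces.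
Variable R : realFieldType.
Local Notation M := 'M[R]_2.
Implicit Types x y : M.
Variable V : M -> Prop.
Hypothesis V_subspace : subspace V.
Hypothesis V_ad : forall x, V x -> V (J2 * x - x * J2).
Hypothesis V_reflect : forall x, V x -> V (H2 * x * H2).

(* [J2, [J2, _]] vanishes on scalar and skew matrices and is -4 on traceless
   symmetric ones, so this is the projection onto the scalar-plus-skew part. *)
Let proj_ZK x := x + 4^-1 *: (J2 * (J2 * x - x * J2) - (J2 * x - x * J2) * J2).

Let V_proj_ZK x : V x -> V (proj_ZK x).
Proof.
have [_ VD VZ] := V_subspace.
by move=> Vx; exact (VD _ _ Vx (VZ _ _ (V_ad (V_ad Vx)))).
Qed.

Lemma V1_of_trace x : V x -> x i0 i0 + x i1 i1 != 0 -> V 1.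
Proof.
have [_ VD VZ] := V_subspace.
move=> Vx trx; have Vw := V_proj_ZK Vx.
suff -> : 1 = (x i0 i0 + x i1 i1)^-1 *: (proj_ZK x + H2 * proj_ZK x * H2).
  exact (VZ _ _ (VD _ _ Vw (V_reflect Vw))).
by move: trx; rewrite /proj_ZK; mx2_coords x a b c d; mx2_simpl => ?; congr mx2; field.
Qed.

Lemma VJ2_of_asym x : V x -> x i0 i1 != x i1 i0 -> V J2.
Proof.
have [_ _ VZ] := V_subspace.
move=> Vx asymx; have Vw := V_proj_ZK Vx.
suff -> : J2 = (x i0 i1 - x i1 i0)^-1 *: (proj_ZK x - H2 * proj_ZK x * H2).
  exact (VZ _ _ (subspaceB V_subspace Vw (V_reflect Vw))).
move: asymx; rewrite -subr_eq0 /proj_ZK; mx2_coords x a b c d; mx2_simpl => ?.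
by congr mx2; field.
Qed.

Lemma VH2_VP2_of_sym_traceless x : V x ->
  ~ (x i0 i0 = x i1 i1 /\ x i0 i1 + x i1 i0 = 0) -> V H2 /\ V P2.
Proof.
have [_ VD VZ] := V_subspace.
move=> Vx nzx; pose p := x i0 i0 - x i1 i1; pose q := x i0 i1 + x i1 i0.
pose y := J2 * x - x * J2; pose z := J2 * y - y * J2.
have Vy : V y by exact: V_ad.
have Vz : V z by exact: V_ad.
have pq : p ^+ 2 + q ^+ 2 != 0.
  by rewrite sqr_add_sqr_eq0 subr_eq0; apply/negP => /andP [/eqP ? /eqP ?]; apply: nzx.
split.
  suff -> : H2 = (p ^+ 2 + q ^+ 2)^-1 *: ((- p / 2) *: z + q *: y).
    exact (VZ _ _ (VD _ _ (VZ _ _ Vz) (VZ _ _ Vy))).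
  by move: pq; rewrite /p /q /z /y; mx2_coords x a b c d; mx2_simpl => ?; congr mx2; field.
suff -> : P2 = (p ^+ 2 + q ^+ 2)^-1 *: ((- q / 2) *: z - p *: y).
  exact (VZ _ _ (subspaceB V_subspace (VZ _ _ Vz) (VZ _ _ Vy))).
by move: pq; rewrite /p /q /z /y; mx2_coords x a b c d; mx2_simpl => ?; congr mx2; field.
Qed.

Lemma V_eq_comp_sum : exists bZ bK bS, same_set V (comp_sum bZ bK bS).
Proof.
have [bZ [hasZ trV]] := @flag_dichotomy _ V (fun x => x i0 i0 + x i1 i1 = 0) (V 1)
  (fun x Vx ntr => V1_of_trace Vx (introN eqP ntr)).
have [bK [hasK symV]] := @flag_dichotomy _ V (fun x => x i0 i1 = x i1 i0) (V J2)
  (fun x Vx nsym => VJ2_of_asym Vx (introN eqP nsym)).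
have [bS [hasS scskV]] := @flag_dichotomy _ V
  (fun x => x i0 i0 = x i1 i1 /\ x i0 i1 + x i1 i0 = 0) (V H2 /\ V P2)
  (fun x Vx => VH2_VP2_of_sym_traceless Vx).
exists bZ, bK, bS => x; split.
  move=> Vx; split.
  - by case: bZ hasZ trV => // _ /(_ isT x Vx).
  - by case: bK hasK symV => // _ /(_ isT x Vx).
  - by case: bS hasS scskV => // _ /(_ isT x Vx).
move=> [trx symx scskx] {trV symV scskV}; have [V0 VD VZ] := V_subspace.
have -> : x = ((x i0 i0 + x i1 i1) / 2) *: 1 + ((x i0 i1 - x i1 i0) / 2) *: J2 +
    (((x i0 i0 - x i1 i1) / 2) *: H2 + ((x i0 i1 + x i1 i0) / 2) *: P2).
  by mx2_coords x a b c d; mx2_simpl; congr mx2; field.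
apply: (VD _ _ (VD _ _ _ _) (VD _ _ _ _)).
- case: bZ hasZ trx => [V1 _|_ ->]; first exact: VZ (V1 isT).
  by rewrite mul0r scale0r.
- case: bK hasK symx => [VJ _|_ ->]; first exact: VZ (VJ isT).
  by rewrite subrr mul0r scale0r.
- case: bS hasS scskx => [VHP _|_ [-> _]]; first exact: VZ (proj1 (VHP isT)).
  by rewrite subrr mul0r scale0r.
- case: bS hasS scskx => [VHP _|_ [_ ->]]; first exact: VZ (proj2 (VHP isT)).
  by rewrite mul0r scale0r.
Qed.

Theorem trmx_invariant_span_in_list : span_in_list (@trmx R 2 2) V.
Proof.
have [bZ [bK [bS EV]]] := V_eq_comp_sum.
case: bZ bK bS EV => [] [] [] EV.
- by do 7 right; exact: same_set_trans EV (@comp_sum_full R).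
- by do 5 right; left; exact: same_set_trans EV (@comp_sum_central_skew R).
- by do 4 right; left; exact: same_set_trans EV (@comp_sum_sym R).
- by right; left; exact: same_set_trans EV (@comp_sum_central R).
- by do 6 right; left; exact: same_set_trans EV (@comp_sum_comm R).
- by right; right; left; exact: same_set_trans EV (@comp_sum_skew R).
- by do 3 right; left; exact: same_set_trans EV (@comp_sum_sym_skew_comm R).
- by left; exact: same_set_trans EV (@comp_sum_zero R).
Qed.

End TransposeInvariantSubspaces.

Theorem mainTheorem3 :
  (forall (R : realType) (k : nat) (kind : 'I_k -> bool) (c : {perm 'I_k} -> R),
     span_in_list (@trmx R 2 2) (lspan (star_image (@trmx R 2 2) kind c))) /\
  (forall (F : fieldType) (k : nat) (kind : 'I_k -> bool) (c : {perm 'I_k} -> F),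
     span_in_list (@symp F) (lspan (star_image (@symp F) kind c))).
Proof.
split=> [R k kind c | F k kind c].
  apply: trmx_invariant_span_in_list; first exact: lspan_subspace.
    by move=> x; apply: star_span_ad => y; apply: trmx_ad; exact: J2_tr.
  move=> x; apply: star_span_conj => [||y]; [exact: mulH2H2 | exact: mulH2H2 |].
  by apply: trmx_conj; exact: H2_tr.
apply: symp_invariant_span_in_list; first exact: lspan_subspace.
- by move=> x; apply: star_span_ad => y; apply: symp_ad; exact: symp_E12.
- move=> x; apply: star_span_conj => [||y]; [exact: mulP2P2 | exact: mulP2P2 |].
  by apply: symp_conj; exact: mulP2P2.
- move=> x; apply: star_span_conj => [||y]; [exact: mulU2invU2 | exact: mulU2U2inv |].
  by apply: symp_conj; [exact: mulU2invU2 | exact: mulU2U2inv].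
Qed.
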